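(* (i) The following monomials of $P_5$ are strictly inadmissible: $x_1x_2^{6}x_3^{3}x_4^{6}x_5^{5}$, $x_1x_2^{6}x_3^{6}x_4^{3}x_5^{5}$, $x_1^{3}x_2^{5}x_3^{5}x_4^{2}x_5^{6}$, $x_1^{3}x_2^{5}x_3^{5}x_4^{6}x_5^{2}$, $x_1^{3}x_2^{5}x_3^{6}x_4^{5}x_5^{2}$, $x_1^{3}x_2^{4}x_3^{5}x_4^{3}x_5^{6}$, $x_1^{3}x_2^{4}x_3^{5}x_4^{6}x_5^{3}$, $x_1^{3}x_2^{5}x_3^{4}x_4^{3}x_5^{6}$, $x_1^{3}x_2^{5}x_3^{4}x_4^{6}x_5^{3}$, $x_1^{3}x_2^{5}x_3^{6}x_4^{4}x_5^{3}$. (ii) The following monomials of $P_5$ are strongly inadmissible: $x_1x_2^{3}x_3^{6}x_4^{6}x_5^{5}$, $x_1^{3}x_2x_3^{6}x_4^{6}x_5^{5}$, $x_1^{3}x_2^{5}x_3^{6}x_4^{6}x_5$, $x_1^{3}x_2^{5}x_3^{2}x_4^{6}x_5^{5}$, $x_1^{3}x_2^{5}x_3^{6}x_4^{2}x_5^{5}$.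
   Context: $P_5=\mathbb F_2[x_1,\dots,x_5]$, $\deg x_i=1$, a module over the mod-2 Steenrod algebra $\mathcal A$. $\mathcal A(s-1)$ is the sub-Hopf algebra generated by $Sq^r$, $0\le r<2^s$, with augmentation ideal $\mathcal A(s-1)^+$. For $x=x_1^{a_1}\cdots x_5^{a_5}$: weight vector $\omega_i(x)=\sum_j\alpha_{i-1}(a_j)$ ($\alpha_r(a)$ the $r$-th binary digit), exponent vector $\sigma(x)=(a_1,\dots,a_5)$, both ordered left-lexicographically; for monomials of equal degree, $x<y$ iff $\omega(x)<\omega(y)$, or $\omega(x)=\omega(y)$ and $\sigma(x)<\sigma(y)$. $P_5^-(\omega)$ is spanned by monomials $y$ of degree $\sum_i2^{i-1}\omega_i$ with $\omega(y)<\omega$. Minimal spike of degree $n$: if $\mu(n)=s\le5$, where $\mu(n)$ is the least $r$ with $n=\sum_{i=1}^r(2^{u_i}-1)$, $u_i>0$, write uniquely $n=\sum_{i=1}^s(2^{e_i}-1)$, $e_1>\dots>e_{s-1}\ge e_s>0$; the minimal spike is $z=\prod_{i=1}^sx_i^{2^{e_i}-1}$. $\mathcal P_{(5,n)}$ is spanned by monomials $x$ of degree $n$ with $\sum_{j=1}^h2^{j-1}\omega_j(x)<\sum_{j=1}^h2^{j-1}\omega_j(z)$ for some $h\ge1$. With $s=\max\{i:\omega_i(x)>0\}$: a monomial $x$ is strictly inadmissible if there are monomials $y_1,\dots,y_r<x$ with $x+\sum_jy_j\in\mathcal A(s-1)^+P_5+P_5^-(\omega(x))$; a monomial $x$ of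 degree $n$ is strongly inadmissible if there are monomials $y_1,\dots,y_t$ with $\omega(y_u)=\omega(x)$, $y_u<x$, and $x+\sum_uy_u\in\mathcal A(s-1)^+P_5+P_5^-(\omega(x))+\mathcal P_{(5,n)}$. *)

From HB Require Import structures.
From mathcomp Require Import all_boot all_order all_algebra.
From mathcomp Require Import mpoly.
Set Implicit Arguments. Unset Strict Implicit. Unset Printing Implicit Defensive.
Import GRing.Theory.
Local Open Scope ring_scope.

Definition mon5 := 'X_{1..5}.
Definition P5 := {mpoly 'F_2[5]}.

Definition mkmon (a b c d e : nat) : mon5 := [multinom of [:: a; b; c; d; e]].

(* Sq^k(x_1^{a_1}...x_5^{a_5}) = sum_{k_1+...+k_5=k} prod_j C(a_j,k_j) x_j^{a_j+k_j}
   (Cartan formula together with Sq^k(x^a) = C(a,k) x^{a+k}). *)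
Definition Sq_mon (k : nat) (m : mon5) : P5 :=
  \sum_(t : {ffun 'I_5 -> 'I_k.+1} | (\sum_(i < 5) (t i : nat))%N == k)
     ((\prod_(i < 5) 'C(m i, t i))%N)%:R *: 'X_[[multinom (m i + t i)%N | i < 5]].

Definition Sq (k : nat) (p : P5) : P5 :=
  \sum_(m <- msupp p) p@_m *: Sq_mon k m.

Definition Sqw (w : seq nat) (p : P5) : P5 := foldr Sq p w.

(* A(s-1)^+ P_5: the subspace spanned by theta(f), f in P_5, theta a (nonempty)
   product of generators Sq^r of A(s-1) with 0 < r < 2^s; these products span
   the augmentation ideal A(s-1)^+ (Sq^0 = 1). *)
Inductive AplusP (s : nat) : P5 -> Prop :=
  | AplusP0 : AplusP s 0
  | AplusPD f g : AplusP s f -> AplusP s g -> AplusP s (f + g)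
  | AplusPgen (w : seq nat) (f : P5) :
      w != [::] -> all (fun r => (0 < r < 2 ^ s)%N) w -> AplusP s (Sqw w f).

Definition alpha (r a : nat) : nat := odd (a %/ 2 ^ r).

(* wt m k = omega_{k+1}(m)  (0-based index) *)
Definition wt (m : mon5) (k : nat) : nat := (\sum_(j < 5) alpha k (m j))%N.

Definition wlt (u v : nat -> nat) : Prop :=
  exists k, (u k < v k)%N /\ forall j, (j < k)%N -> u j = v j.

Definition sigma_lt (m1 m2 : mon5) : Prop :=
  exists i : 'I_5, (m1 i < m2 i)%N /\ forall j : 'I_5, (j < i)%N -> m1 j = m2 j.

Definition mon_lt (x y : mon5) : Prop :=
  mdeg x = mdeg y /\
  (wlt (wt x) (wt y) \/ (wt x =1 wt y /\ sigma_lt x y)).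

(* P_5^-(omega) for omega a weight vector of degree d = sum_i 2^{i-1} omega_i:
   spanned by monomials y of degree d with omega(y) < omega. *)
Definition Pminus (w : nat -> nat) (d : nat) (f : P5) : Prop :=
  forall m, m \in msupp f -> mdeg m = d /\ wlt (wt m) w.

(* s = max{ i : omega_i(x) > 0 } (1-based) *)
Definition top_weight (x : mon5) (s : nat) : Prop :=
  (0 < s)%N /\ (0 < wt x s.-1)%N /\ forall k, (s <= k)%N -> wt x k = 0%N.

Definition spike_sum (u : seq nat) : nat := sumn [seq (2 ^ e - 1)%N | e <- u].

Definition min_spike (n : nat) (z : mon5) : Prop :=
  exists e : seq nat,
    (size e <= 5)%N /\
    n = spike_sum e /\
    (* size e = mu(n): no shorter representation of n as a sum of 2^u - 1, u > 0 *)
    (forall u : seq nat, all (fun v => (0 < v)%N) u -> n = spike_sum u ->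
       (size e <= size u)%N) /\
    (forall i, (i.+2 < size e)%N -> (nth 0%N e i.+1 < nth 0%N e i)%N) /\
    (forall i, i.+2 = size e -> (nth 0%N e i.+1 <= nth 0%N e i)%N) /\
    (0 < nth 0%N e (size e).-1)%N /\
    (forall i : 'I_5, z i = (if (i < size e)%N then 2 ^ nth 0%N e i - 1 else 0)%N).
Definition Pcal (n : nat) (z : mon5) (f : P5) : Prop :=
  forall m, m \in msupp f ->
    mdeg m = n /\
    exists h, (\sum_(k < h.+1) 2 ^ k * wt m k < \sum_(k < h.+1) 2 ^ k * wt z k)%N.

Definition strictly_inadmissible (x : mon5) : Prop :=
  exists s, top_weight x s /\
  exists ys : seq mon5, (forall y, y \in ys -> mon_lt y x) /\
  exists a b : P5, AplusP s a /\ Pminus (wt x) (mdeg x) b /\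
    'X_[x] + \sum_(y <- ys) 'X_[y] = a + b.

Definition strongly_inadmissible (x : mon5) : Prop :=
  exists s, top_weight x s /\
  exists z, min_spike (mdeg x) z /\
  exists ys : seq mon5,
    (forall y, y \in ys -> wt y =1 wt x /\ mon_lt y x) /\
  exists a b c : P5, AplusP s a /\ Pminus (wt x) (mdeg x) b /\ Pcal (mdeg x) z c /\
    'X_[x] + \sum_(y <- ys) 'X_[y] = a + b + c.

From mathcomp Require Import all_boot all_order all_algebra.
From mathcomp Require Import mpoly.
From mathcomp Require Import zify.
Set Implicit Arguments. Unset Strict Implicit. Unset Printing Implicit Defensive.
Import GRing.Theory.
Local Open Scope ring_scope.

(* Every monomial in the statement is shown (strictly or strongly) inadmissible by
   an explicit witness of the defining identity
      x + sum_j y_j = sum_i Sq^{r_i}(g_i) + (terms of lower weight) [+ terms of P_(5,21)],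
   with all r_i in {1, 2}, i.e. in A(2)^+, since x has top weight index s = 3.
   The witnesses (certificates) are finite lists of exponent vectors; the file
   develops a boolean checker for them and proves it sound:
   - monomials of P_5 are identified with their exponent lists of length 5;
   - the coefficients of Sq^k(x^g) are given by the Cartan formula as a product of
     binomial coefficients, which is computable on exponent lists;
   - an identity between sums of monomials and of squares holds in P_5 = F_2[x_1..x_5]
     as soon as every exponent list of the right degree occurs an even number of
     times on its two sides, which is checked over all compositions of the degree;
   - the weight and exponent orders, the top weight index, the spike condition of
     P_(5,n) and the minimal spike of degree 21 are decided on exponent lists. *)

Definition expseq (m : mon5) : seq nat := tval (multinom_val m).

Definition mk (l : seq nat) : mon5 :=
  mkmon (nth 0 l 0) (nth 0 l 1) (nth 0 l 2) (nth 0 l 3) (nth 0 l 4).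

Lemma expseq_inj : injective expseq.
Proof. by move=> m1 m2 E; apply/val_inj/val_inj. Qed.

Lemma expseq_mk l : size l = 5%N -> expseq (mk l) = l.
Proof. by case: l => [|a [|b [|c [|d [|e [|]]]]]]. Qed.

Lemma mk_expseq m : mk (expseq m) = m.
Proof. by apply: expseq_inj; rewrite expseq_mk // size_tuple. Qed.

Lemma mon5_cases (P : mon5 -> Prop) :
  (forall a b c d e, P (mkmon a b c d e)) -> forall m, P m.
Proof. by move=> Pmk m; rewrite -[m]mk_expseq; apply: Pmk. Qed.

Lemma mk_nth l (i : 'I_5) : size l = 5%N -> mk l i = nth 0%N l i.
Proof. by move=> size_l; rewrite (mnm_nth 0) -/(expseq (mk l)) expseq_mk. Qed.

Lemma mdeg_expseq m : mdeg m = sumn (expseq m).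
Proof. by rewrite sumnE. Qed.

Lemma wt_expseq m k : wt m k = sumn [seq alpha k a | a <- expseq m].
Proof. by rewrite /wt sumnE big_map big_tuple. Qed.

Lemma mdeg_shift (g : mon5) (t : 'I_5 -> nat) :
  mdeg [multinom (g i + t i)%N | i < 5] = (mdeg g + \sum_(i < 5) t i)%N.
Proof.
by rewrite !mdegE -big_split; apply: eq_bigr => i _; rewrite mnmE.
Qed.

(* Cartan formula, coefficientwise: x^m occurs in Sq^k(x^g) with coefficient
   prod_i C(g_i, m_i - g_i) when m >= g componentwise and deg m = deg g + k, and
   does not occur otherwise (the composition t of k with g + t = m is unique). *)
Lemma mcoeff_Sq_mon k (g m : mon5) :
  (Sq_mon k g)@_m =
  (if [forall i, g i <= m i]%N && (mdeg m == mdeg g + k)%N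
   then (\prod_(i < 5) 'C(g i, m i - g i))%N else 0%N)%:R.
Proof.
rewrite /Sq_mon raddf_sum /=.
under eq_bigr do rewrite mcoeffZ mcoeffX.
case: ifP => [/andP[/forallP le_gm /eqP deg_m] | not_above].
- have sum_diff : (\sum_(i < 5) (m i - g i) = k)%N.
    apply/eqP; rewrite -(eqn_add2l (mdeg g)) -deg_m -mdeg_shift.
    by apply/eqP; congr mdeg; apply/mnmP => i; rewrite mnmE subnKC.
  have diff_le i : (m i - g i < k.+1)%N.
    by rewrite ltnS -sum_diff (bigD1 i) //= leq_addr.
  pose t0 : {ffun 'I_5 -> 'I_k.+1} := [ffun i => Ordinal (diff_le i)].
  have t0_sum : (\sum_(i < 5) (t0 i : nat))%N == k.
    by rewrite -[X in _ == X]sum_diff; apply/eqP/eq_bigr => i _; rewrite ffunE.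
  rewrite (bigD1 t0) //= [X in _ + X]big1 ?addr0.
    have -> : [multinom (g i + t0 i)%N | i < 5] == m.
      by apply/eqP/mnmP => i; rewrite mnmE ffunE /= subnKC.
    by rewrite mulr1; congr (_%:R); apply: eq_bigr => i _; rewrite ffunE.
  move=> t /andP[_ t_ne].
  have -> : ([multinom (g i + t i)%N | i < 5] == m) = false.
    apply/negbTE; apply: contra t_ne => /eqP/mnmP shift_m.
    apply/eqP/ffunP => i; apply/val_inj; rewrite ffunE /= -(shift_m i) mnmE.
    by rewrite addKn.
  by rewrite mulr0.
- apply: big1 => t /eqP t_sum.
  have -> : ([multinom (g i + t i)%N | i < 5] == m) = false.
    apply/negbTE/negP => /eqP shift_m; move: not_above; rewrite -shift_m.
    rewrite mdeg_shift t_sum eqxx andbT.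
    by move/negbT/forallPn => [i]; rewrite mnmE leq_addr.
  by rewrite mulr0.
Qed.

Definition coefSq (g : seq nat) (k : nat) (l : seq nat) : nat :=
  if all2 leq g l && (sumn l == sumn g + k)%N
  then foldr muln 1%N [seq 'C(p.1, p.2 - p.1) | p <- zip g l] else 0%N.

Lemma SqX k (g : mon5) : Sq k 'X_[g] = Sq_mon k g.
Proof. by rewrite /Sq msuppX big_seq1 mcoeffX eqxx scale1r. Qed.

Lemma forall_big_and (I : finType) (B : pred I) :
  [forall i, B i] = \big[andb/true]_i B i.
Proof. by rewrite big_andE. Qed.

Lemma mcoeff_SqX k (g m : mon5) :
  (Sq k 'X_[g])@_m = (coefSq (expseq g) k (expseq m))%:R.
Proof.
rewrite SqX mcoeff_Sq_mon !mdeg_expseq forall_big_and.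
elim/mon5_cases: g; elim/mon5_cases: m => a b c d e a' b' c' d' e'.
by rewrite !big_ord_recl !big_ord0 !(mnm_nth 0) /coefSq /= !andbT !muln1.
Qed.

Lemma F2_nat (n : nat) : (n%:R : 'F_2) = (odd n)%:R.
Proof. by rewrite -(@Fp_nat_mod 2 erefl n) modn2. Qed.

Lemma F2_nat_eq (a b : nat) : ~~ odd (a + b) -> (a%:R : 'F_2) = b%:R.
Proof. by rewrite oddD (F2_nat a) (F2_nat b); case: (odd a); case: (odd b). Qed.

Fixpoint compositions (n k : nat) : seq (seq nat) :=
  if k is k'.+1 then
    flatten [seq [seq i :: r | r <- compositions (n - i) k'] | i <- iota 0 n.+1]
  else if n == 0%N then [:: [::]] else [::].

Lemma compositions_complete k l : size l = k -> l \in compositions (sumn l) k.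
Proof.
elim: k l => [|k IH] [|a l] // [size_l].
set n := sumn (a :: l).
change (a :: l \in flatten
  [seq [seq i :: r | r <- compositions (n - i) k] | i <- iota 0 n.+1]).
apply/flatten_mapP; exists a; first by rewrite mem_iota /n /=; lia.
by apply: map_f; rewrite /n /= addKn; apply: IH.
Qed.

Definition sum_mons (L : seq (seq nat)) : P5 := \sum_(l <- L) 'X_[mk l].

Definition sum_Sq (gs : seq (nat * seq nat)) : P5 :=
  \sum_(p <- gs) Sq p.1 'X_[mk p.2].

Definition shaped (d : nat) (l : seq nat) := (size l == 5%N) && (sumn l == d).

Definition shaped_Sq (d : nat) (p : nat * seq nat) :=
  (size p.2 == 5%N) && (sumn p.2 + p.1 == d)%N.

Lemma mk_eq l (m : mon5) : size l = 5%N -> (mk l == m) = (l == expseq m).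
Proof.
move=> size_l; apply/eqP/eqP => [<-|->]; first by rewrite expseq_mk.
by rewrite mk_expseq.
Qed.

Lemma mcoeff_sum_mons d L m : all (shaped d) L ->
  (sum_mons L)@_m = (count_mem (expseq m) L)%:R.
Proof.
elim: L => [|l L IH] /=; first by rewrite /sum_mons big_nil mcoeff0.
case/andP => /andP[/eqP size_l _] shaped_L.
by rewrite /sum_mons big_cons mcoeffD mcoeffX mk_eq // natrD -IH.
Qed.

Lemma mcoeff_sum_Sq d gs m : all (shaped_Sq d) gs ->
  (sum_Sq gs)@_m = (sumn [seq coefSq p.2 p.1 (expseq m) | p <- gs])%:R.
Proof.
elim: gs => [|p gs IH] /=; first by rewrite /sum_Sq big_nil mcoeff0.
case/andP => /andP[/eqP size_p _] shaped_gs.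
by rewrite /sum_Sq big_cons mcoeffD mcoeff_SqX expseq_mk // natrD -IH.
Qed.

(* Number of occurrences of the monomial l on the two sides of
   x + sum ys = sum_Sq gs + sum lb + sum lc; the identity holds iff it is always even. *)
Definition occurrences x ys gs lb lc (l : seq nat) : nat :=
  ((x == l) + count_mem l ys
   + (sumn [seq coefSq p.2 p.1 l | p <- gs] + count_mem l lb + count_mem l lc))%N.

Definition identity_check d x ys gs lb lc :=
  [&& all (shaped d) (x :: ys ++ lb ++ lc), all (shaped_Sq d) gs &
      all (fun l => ~~ odd (occurrences x ys gs lb lc l)) (compositions d 5)].

Lemma count_off_degree d L l : all (shaped d) L -> sumn l != d -> count_mem l L = 0%N.
Proof.
move=> shaped_L deg_l; apply/count_memPn; apply: contra deg_l => l_in.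
by case/andP: (allP shaped_L l l_in).
Qed.

Lemma coefSq_off_degree d gs l : all (shaped_Sq d) gs -> sumn l != d ->
  sumn [seq coefSq p.2 p.1 l | p <- gs] = 0%N.
Proof.
move=> shaped_gs deg_l; rewrite sumnE big_map big1_seq // => p /andP[_ p_in].
case/andP: (allP shaped_gs p p_in) => _ /eqP deg_p.
by rewrite /coefSq deg_p (negbTE deg_l) andbF.
Qed.

Lemma occurrences_off_degree d x ys gs lb lc l :
  identity_check d x ys gs lb lc -> sumn l != d -> occurrences x ys gs lb lc l = 0%N.
Proof.
case/and3P; rewrite /= !all_cat => /and4P[/andP[_ /eqP deg_x] shaped_ys shaped_lb shaped_lc].
move=> shaped_gs _ deg_l.
rewrite /occurrences (coefSq_off_degree shaped_gs) // !(count_off_degree _ deg_l) //.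
by have -> : x == l = false by apply: contraNF deg_l => /eqP <-; rewrite deg_x.
Qed.

Lemma identity_checkP d x ys gs lb lc : identity_check d x ys gs lb lc ->
  'X_[mk x] + sum_mons ys = sum_Sq gs + sum_mons lb + sum_mons lc.
Proof.
move=> chk; have := chk; case/and3P => shapes shaped_gs parity.
move: shapes; rewrite /= !all_cat => /and4P[/andP[/eqP size_x _] shaped_ys shaped_lb shaped_lc].
apply/mpolyP => m; rewrite !mcoeffD mcoeffX mk_eq // (mcoeff_sum_Sq _ shaped_gs).
rewrite !(mcoeff_sum_mons _ shaped_ys, mcoeff_sum_mons _ shaped_lb, mcoeff_sum_mons _ shaped_lc).
rewrite -!natrD; apply: F2_nat_eq; rewrite -/(occurrences x ys gs lb lc (expseq m)).
have [deg_m|deg_m] := eqVneq (sumn (expseq m)) d.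
  by apply: (allP parity); rewrite -deg_m compositions_complete // size_tuple.
by rewrite (occurrences_off_degree chk deg_m).
Qed.

Definition wts (l : seq nat) (k : nat) : nat := sumn [seq alpha k a | a <- l].

Lemma wt_mk l k : size l = 5%N -> wt (mk l) k = wts l k.
Proof. by move=> size_l; rewrite wt_expseq expseq_mk. Qed.

Lemma mdeg_mk l : size l = 5%N -> mdeg (mk l) = sumn l.
Proof. by move=> size_l; rewrite mdeg_expseq expseq_mk. Qed.

Definition bounded (b : nat) (l : seq nat) := all (fun a => a < 2 ^ b)%N l.

Lemma wts_vanish b l k : bounded b l -> (b <= k)%N -> wts l k = 0%N.
Proof.
move=> /allP small_l le_bk; rewrite /wts sumnE big_map big1_seq // => a /andP[_ a_in].
by rewrite /alpha divn_small // (leq_trans (small_l a a_in)) // leq_exp2l.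
Qed.

Definition weights_eqb (l x : seq nat) :=
  [&& all (fun k => wts l k == wts x k) (iota 0 5), bounded 5 l & bounded 5 x].

Lemma weights_eqbP l x : weights_eqb l x -> wts l =1 wts x.
Proof.
case/and3P => /allP low small_l small_x k.
have [lt_k5|le5k] := ltnP k 5; first by apply/eqP/low; rewrite mem_iota.
by rewrite (wts_vanish small_l) ?(wts_vanish small_x).
Qed.

Definition weights_ltb (l x : seq nat) :=
  has (fun k => (wts l k < wts x k)%N && all (fun j => wts l j == wts x j) (iota 0 k))
      (iota 0 5).

Lemma weights_ltbP l x : weights_ltb l x -> wlt (wts l) (wts x).
Proof.
case/hasP => k _ /andP[lt_k /allP eq_below]; exists k; split => // j lt_jk.
by apply/eqP/eq_below; rewrite mem_iota.
Qed.

Definition exps_ltb (l x : seq nat) :=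
  has (fun i => (nth 0 l i < nth 0 x i)%N && all (fun j => nth 0 l j == nth 0 x j) (iota 0 i))
      (iota 0 5).

Lemma exps_ltbP l x : size l = 5%N -> size x = 5%N -> exps_ltb l x -> sigma_lt (mk l) (mk x).
Proof.
move=> size_l size_x /hasP[i]; rewrite mem_iota => lt_i5 /andP[lt_i /allP eq_below].
exists (Ordinal lt_i5); rewrite !mk_nth //; split => // j lt_ji.
by rewrite !mk_nth //; apply/eqP/eq_below; rewrite mem_iota.
Qed.

Lemma sum_ord_sumn (f : nat -> nat) n : (\sum_(k < n) f k)%N = sumn [seq f k | k <- iota 0 n].
Proof. by rewrite -(big_mkord xpredT) sumnE big_map /index_iota subn0. Qed.

Definition below_spikeb (l z : seq nat) :=
  has (fun h => sumn [seq 2 ^ k * wts l k | k <- iota 0 h.+1]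
              < sumn [seq 2 ^ k * wts z k | k <- iota 0 h.+1])%N (iota 0 5).

Lemma top_weight_mk l s : size l = 5%N -> (0 < s)%N -> (0 < wts l s.-1)%N ->
  bounded s l -> top_weight (mk l) s.
Proof.
move=> size_l s_gt0 top_pos small_l; split; rewrite // wt_mk //; split => // k le_sk.
by rewrite wt_mk // (wts_vanish small_l).
Qed.

Lemma AplusP_sum_Sq s gs : all (fun p => 0 < p.1 < 2 ^ s)%N gs -> AplusP s (sum_Sq gs).
Proof.
elim: gs => [|p gs IH] /=; first by rewrite /sum_Sq big_nil => _; exact: AplusP0.
case/andP => p_gen gs_gen; rewrite /sum_Sq big_cons; apply: AplusPD; last exact: IH.
by apply: (AplusPgen (w := [:: p.1])) => //=; rewrite p_gen.
Qed.

Lemma msupp_sum_mons d L m : all (shaped d) L -> m \in msupp (sum_mons L) ->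
  expseq m \in L /\ mdeg m = d.
Proof.
move=> shaped_L; rewrite mcoeff_msupp (mcoeff_sum_mons _ shaped_L) F2_nat.
have [m_in _|/count_memPn -> //] := boolP (expseq m \in L).
by case/andP: (allP shaped_L _ m_in) => _ /eqP deg_m; rewrite mdeg_expseq.
Qed.

Lemma wlt_ext u v u' v' : u =1 u' -> v =1 v' -> wlt u' v' -> wlt u v.
Proof.
move=> Eu Ev [k [lt_k eq_below]]; exists k; rewrite Eu Ev; split => // j lt_jk.
by rewrite Eu Ev eq_below.
Qed.

Lemma lower_terms d x ys : all (shaped d) (x :: ys) ->
  all (fun y => weights_eqb y x && exps_ltb y x) ys ->
  forall y, y \in map mk ys -> wt y =1 wt (mk x) /\ mon_lt y (mk x).
Proof.
case/andP => /andP[/eqP size_x /eqP deg_x] shaped_ys lower y /mapP[l l_in ->].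
case/andP: (allP shaped_ys l l_in) => /eqP size_l /eqP deg_l.
case/andP: (allP lower l l_in) => same_wt lt_exps.
have eq_wt : wt (mk l) =1 wt (mk x).
  by move=> k; rewrite !wt_mk //; apply: weights_eqbP.
split=> //; split; first by rewrite !mdeg_mk // deg_l deg_x.
by right; split => //; apply: exps_ltbP.
Qed.

Lemma Pminus_sum_mons d x lb : size x = 5%N -> all (shaped d) lb ->
  all (weights_ltb^~ x) lb -> Pminus (wt (mk x)) d (sum_mons lb).
Proof.
move=> size_x shaped_lb lower m /(msupp_sum_mons shaped_lb) [m_in deg_m].
split=> //; apply: (@wlt_ext _ _ (wts (expseq m)) (wts x)).
- by move=> k; rewrite wt_expseq.
- by move=> k; rewrite wt_mk.
- exact: weights_ltbP (allP lower _ m_in).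
Qed.

Lemma Pcal_sum_mons d z lc : size z = 5%N -> all (shaped d) lc ->
  all (below_spikeb^~ z) lc -> Pcal d (mk z) (sum_mons lc).
Proof.
move=> size_z shaped_lc below m /(msupp_sum_mons shaped_lc) [m_in deg_m].
split=> //; case/hasP: (allP below _ m_in) => h _ lt_h; exists h.
rewrite (sum_ord_sumn (fun k => 2 ^ k * wt m k)%N).
rewrite (sum_ord_sumn (fun k => 2 ^ k * wt (mk z) k)%N).
have wt_z k : (2 ^ k * wt (mk z) k = 2 ^ k * wts z k)%N by rewrite wt_mk.
by rewrite (eq_map wt_z); under eq_map do rewrite wt_expseq.
Qed.

Lemma pow2_ge32 v : (5 <= v)%N -> (32 <= 2 ^ v)%N.
Proof. by move=> le5v; rewrite -[32%N]/(2 ^ 5)%N leq_exp2l. Qed.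

(* The minimal spike of degree 21 is x_1^15 x_2^3 x_3^3 (e = (4, 2, 2)). *)
Definition spike21 : seq nat := [:: 15; 3; 3; 0; 0]%N.

Lemma mu21 u : all (fun v => 0 < v)%N u -> 21%N = spike_sum u -> (3 <= size u)%N.
Proof.
rewrite /spike_sum; case: u => [|v [|w [|? ?]]] //= _.
- case: (ltnP v 5) => [|/pow2_ge32]; last by lia.
  by move: v => [|[|[|[|[|?]]]]].
- case: (ltnP v 5) => [lt_v5|/pow2_ge32]; last by lia.
  case: (ltnP w 5) => [|/pow2_ge32]; last by lia.
  by move: v w lt_v5 => [|[|[|[|[|?]]]]] [|[|[|[|[|?]]]]].
Qed.

Lemma min_spike21 : min_spike 21 (mk spike21).
Proof.
exists [:: 4; 2; 2]%N; do 2!split => //; split.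
  by move=> u u_pos /(mu21 u_pos).
split; first by case=> [|[|]].
split; first by case=> [|[|[|]]].
split => // - [i lt_i5]; rewrite mk_nth //.
by move: i lt_i5 => [|[|[|[|[|?]]]]].
Qed.

(* Membership in the image of a list all of whose entries satisfy P; unlike mapP this
   needs no decidable equality on the entries. *)
Lemma mem_map_all (T : Type) (U : eqType) (f : T -> U) (P : pred T) (s : seq T) u :
  all P s -> u \in map f s -> exists2 t, P t & u = f t.
Proof.
elim: s => //= t s IH /andP[Pt Ps]; rewrite inE => /orP[/eqP ->|]; first by exists t.
exact: IH.
Qed.

(* A certificate for x: the monomials y_j, the squares Sq^r(x^g) of the
   A(2)^+-part, the monomials of lower weight, and the monomials of P_(5,21). *)
Record certificate := Certificate {
  cert_mon : seq nat;
  cert_lower : seq (seq nat);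
  cert_squares : seq (nat * seq nat);
  cert_minus : seq (seq nat);
  cert_spike : seq (seq nat) }.

Definition cert_check (c : certificate) :=
  let x := cert_mon c in
  [&& identity_check (sumn x) x (cert_lower c) (cert_squares c) (cert_minus c) (cert_spike c),
      all (fun p => 0 < p.1 < 2 ^ 3)%N (cert_squares c),
      all (fun y => weights_eqb y x && exps_ltb y x) (cert_lower c),
      all (weights_ltb^~ x) (cert_minus c) &
      (0 < wts x 2)%N && bounded 3 x].

Lemma cert_check_shapes c : cert_check c ->
  size (cert_mon c) = 5%N /\ all (shaped (sumn (cert_mon c))) (cert_spike c).
Proof.
case/and5P => /and3P[shapes _ _] _ _ _ _; move: shapes.
by rewrite /= !all_cat => /and4P[/andP[/eqP size_x _] _ _ shaped_lc].
Qed.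

Lemma cert_checkP c : cert_check c ->
  let x := mk (cert_mon c) in
  [/\ top_weight x 3,
      forall y, y \in map mk (cert_lower c) -> wt y =1 wt x /\ mon_lt y x,
      AplusP 3 (sum_Sq (cert_squares c)),
      Pminus (wt x) (mdeg x) (sum_mons (cert_minus c)) &
      'X_[x] + \sum_(y <- map mk (cert_lower c)) 'X_[y]
        = sum_Sq (cert_squares c) + sum_mons (cert_minus c) + sum_mons (cert_spike c)].
Proof.
case: c => x ys gs lb lc /and5P[ident gens lower minus /andP[top small]] /=.
have := ident; case/and3P => shapes _ _.
move: shapes; rewrite /= !all_cat => /and4P[shaped_x shaped_ys shaped_lb _].
have size_x : size x = 5%N by case/andP: shaped_x => /eqP.
split.
- exact: top_weight_mk.
- by apply: (@lower_terms (sumn x)); rewrite //= shaped_x.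
- exact: AplusP_sum_Sq.
- by rewrite mdeg_mk //; apply: Pminus_sum_mons shaped_lb minus.
- by rewrite big_map; apply: identity_checkP ident.
Qed.

Definition strict_check (c : certificate) := cert_check c && (cert_spike c == [::]).

Lemma strict_checkP c : strict_check c -> strictly_inadmissible (mk (cert_mon c)).
Proof.
case/andP => /cert_checkP[top lower gens minus ident] /eqP no_spike.
exists 3%N; split=> //; exists (map mk (cert_lower c)); split=> [y /lower[]//|].
exists (sum_Sq (cert_squares c)), (sum_mons (cert_minus c)); do 2!split=> //.
by rewrite ident no_spike /sum_mons big_nil addr0.
Qed.

Definition strong_check (c : certificate) :=
  [&& cert_check c, sumn (cert_mon c) == 21%N &
      all (below_spikeb^~ spike21) (cert_spike c)].

Lemma strong_checkP c : strong_check c -> strongly_inadmissible (mk (cert_mon c)).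
Proof.
case/and3P => chk /eqP deg_x below.
have [size_x shaped_lc] := cert_check_shapes chk.
have deg_mk : mdeg (mk (cert_mon c)) = 21%N by rewrite mdeg_mk.
case/cert_checkP: chk => top lower gens minus ident.
exists 3%N; split=> //; exists (mk spike21); rewrite deg_mk; split; first exact: min_spike21.
exists (map mk (cert_lower c)); split=> //.
exists (sum_Sq (cert_squares c)), (sum_mons (cert_minus c)), (sum_mons (cert_spike c)).
split=> //; split; first by rewrite -deg_mk.
split; first by apply: Pcal_sum_mons; rewrite -?deg_x.
by rewrite ident.
Qed.

Definition strict_certificates : seq certificate := [::
  Certificate [:: 1; 6; 3; 6; 5]
    [:: [:: 1; 3; 6; 5; 6]; [:: 1; 3; 6; 6; 5]; [:: 1; 5; 3; 6; 6]; [:: 1; 3; 5; 6; 6];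
       [:: 1; 6; 3; 5; 6]]
    [:: (1, [:: 1; 3; 5; 5; 6]); (1, [:: 1; 3; 5; 6; 5]); (1, [:: 1; 3; 6; 5; 5]);
       (1, [:: 1; 5; 3; 5; 6]); (1, [:: 1; 5; 3; 6; 5]); (1, [:: 1; 6; 3; 5; 5]);
       (2, [:: 1; 3; 5; 5; 5]); (2, [:: 1; 5; 3; 5; 5])]
    [:: [:: 2; 4; 5; 5; 5]; [:: 2; 5; 4; 5; 5]]
    [::];
  Certificate [:: 1; 6; 6; 3; 5]
    [:: [:: 1; 6; 5; 3; 6]; [:: 1; 3; 6; 5; 6]; [:: 1; 3; 6; 6; 5]; [:: 1; 3; 5; 6; 6];
       [:: 1; 5; 6; 3; 6]]
    [:: (1, [:: 1; 3; 5; 5; 6]); (1, [:: 1; 3; 5; 6; 5]); (1, [:: 1; 3; 6; 5; 5]);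
       (1, [:: 1; 5; 5; 3; 6]); (1, [:: 1; 5; 6; 3; 5]); (1, [:: 1; 6; 5; 3; 5]);
       (2, [:: 1; 3; 5; 5; 5]); (2, [:: 1; 5; 5; 3; 5])]
    [:: [:: 2; 5; 5; 4; 5]; [:: 2; 4; 5; 5; 5]]
    [::];
  Certificate [:: 3; 5; 5; 2; 6]
    [:: [:: 3; 5; 3; 4; 6]; [:: 3; 3; 5; 4; 6]]
    [:: (1, [:: 3; 5; 5; 1; 6]); (1, [:: 5; 3; 5; 1; 6]); (1, [:: 5; 5; 3; 1; 6]);
       (2, [:: 3; 3; 5; 2; 6]); (2, [:: 3; 3; 6; 1; 6]); (2, [:: 3; 5; 3; 2; 6]);
       (2, [:: 3; 6; 3; 1; 6]); (2, [:: 6; 3; 3; 1; 6])]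
    [:: [:: 3; 3; 5; 2; 8]; [:: 6; 4; 4; 1; 6]; [:: 3; 3; 6; 1; 8]; [:: 5; 4; 5; 1; 6];
       [:: 3; 8; 3; 1; 6]; [:: 3; 5; 3; 2; 8]; [:: 4; 4; 5; 2; 6]; [:: 4; 5; 4; 2; 6];
       [:: 4; 6; 4; 1; 6]; [:: 3; 3; 8; 1; 6]; [:: 8; 3; 3; 1; 6]; [:: 4; 5; 5; 1; 6];
       [:: 3; 6; 3; 1; 8]; [:: 6; 4; 3; 2; 6]; [:: 5; 5; 4; 1; 6]; [:: 6; 3; 3; 1; 8];
       [:: 4; 4; 6; 1; 6]; [:: 6; 3; 4; 2; 6]]
    [::];
  Certificate [:: 3; 5; 5; 6; 2]
    [:: [:: 3; 5; 3; 6; 4]; [:: 3; 3; 6; 5; 4]]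
    [:: (1, [:: 3; 5; 3; 5; 4]); (1, [:: 3; 5; 5; 5; 2]); (1, [:: 5; 3; 3; 5; 4]);
       (1, [:: 5; 3; 5; 5; 2]); (1, [:: 5; 5; 3; 5; 2]); (2, [:: 3; 3; 3; 6; 4]);
       (2, [:: 3; 3; 5; 6; 2]); (2, [:: 3; 3; 6; 5; 2]); (2, [:: 3; 5; 3; 6; 2]);
       (2, [:: 3; 6; 3; 5; 2]); (2, [:: 6; 3; 3; 5; 2])]
    [:: [:: 3; 5; 4; 5; 4]; [:: 3; 3; 8; 5; 2]; [:: 5; 4; 5; 5; 2]; [:: 4; 4; 3; 6; 4];
       [:: 8; 3; 3; 5; 2]; [:: 3; 3; 5; 8; 2]; [:: 4; 5; 4; 6; 2]; [:: 5; 5; 4; 5; 2];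
       [:: 6; 4; 3; 6; 2]; [:: 4; 5; 5; 5; 2]; [:: 3; 4; 4; 6; 4]; [:: 4; 4; 6; 5; 2];
       [:: 5; 3; 4; 5; 4]; [:: 4; 5; 3; 5; 4]; [:: 6; 3; 4; 6; 2]; [:: 3; 3; 3; 8; 4];
       [:: 5; 4; 3; 5; 4]; [:: 6; 4; 4; 5; 2]; [:: 3; 5; 3; 8; 2]; [:: 4; 3; 4; 6; 4];
       [:: 4; 6; 4; 5; 2]; [:: 3; 8; 3; 5; 2]; [:: 4; 4; 5; 6; 2]]
    [::];
  Certificate [:: 3; 5; 6; 5; 2]
    [:: [:: 3; 5; 6; 3; 4]; [:: 3; 3; 5; 6; 4]]
    [:: (1, [:: 3; 5; 5; 3; 4]); (1, [:: 3; 5; 5; 5; 2]); (1, [:: 5; 3; 5; 3; 4]);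
       (1, [:: 5; 3; 5; 5; 2]); (1, [:: 5; 5; 5; 3; 2]); (2, [:: 3; 3; 5; 6; 2]);
       (2, [:: 3; 3; 6; 3; 4]); (2, [:: 3; 3; 6; 5; 2]); (2, [:: 3; 5; 6; 3; 2]);
       (2, [:: 3; 6; 5; 3; 2]); (2, [:: 6; 3; 5; 3; 2])]
    [:: [:: 3; 3; 8; 5; 2]; [:: 5; 4; 5; 5; 2]; [:: 4; 6; 5; 4; 2]; [:: 3; 3; 5; 8; 2];
       [:: 6; 4; 6; 3; 2]; [:: 3; 3; 8; 3; 4]; [:: 5; 4; 5; 3; 4]; [:: 5; 5; 5; 4; 2];
       [:: 4; 5; 5; 5; 2]; [:: 3; 5; 5; 4; 4]; [:: 4; 5; 6; 4; 2]; [:: 4; 4; 6; 5; 2];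
       [:: 6; 3; 6; 4; 2]; [:: 3; 5; 8; 3; 2]; [:: 4; 3; 6; 4; 4]; [:: 4; 5; 5; 3; 4];
       [:: 3; 8; 5; 3; 2]; [:: 8; 3; 5; 3; 2]; [:: 4; 4; 6; 3; 4]; [:: 6; 4; 5; 4; 2];
       [:: 3; 4; 6; 4; 4]; [:: 5; 3; 5; 4; 4]; [:: 4; 4; 5; 6; 2]]
    [::];
  Certificate [:: 3; 4; 5; 3; 6]
    [:: [:: 3; 4; 3; 5; 6]; [:: 3; 1; 5; 6; 6]; [:: 3; 1; 6; 5; 6]]
    [:: (1, [:: 5; 1; 3; 5; 6]); (1, [:: 5; 1; 5; 3; 6]); (2, [:: 3; 1; 3; 6; 6]);
       (2, [:: 3; 1; 6; 3; 6]); (2, [:: 3; 2; 3; 5; 6]); (2, [:: 3; 2; 5; 3; 6]);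
       (2, [:: 6; 1; 3; 3; 6])]
    [:: [:: 3; 1; 6; 3; 8]; [:: 4; 2; 5; 4; 6]; [:: 4; 1; 4; 6; 6]; [:: 5; 1; 5; 4; 6];
       [:: 6; 2; 4; 3; 6]; [:: 5; 1; 4; 5; 6]; [:: 3; 1; 8; 3; 6]; [:: 8; 1; 3; 3; 6];
       [:: 3; 1; 3; 8; 6]; [:: 4; 1; 6; 4; 6]; [:: 6; 1; 3; 3; 8]; [:: 6; 2; 3; 4; 6];
       [:: 4; 2; 4; 5; 6]; [:: 3; 1; 3; 6; 8]; [:: 3; 2; 5; 3; 8]; [:: 3; 2; 3; 5; 8];
       [:: 6; 1; 4; 4; 6]]
    [::];
  Certificate [:: 3; 4; 5; 6; 3]
    [:: [:: 3; 1; 6; 6; 5]; [:: 3; 4; 3; 6; 5]; [:: 3; 1; 5; 6; 6]]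
    [:: (1, [:: 5; 1; 3; 6; 5]); (1, [:: 5; 1; 5; 6; 3]); (2, [:: 3; 1; 3; 6; 6]);
       (2, [:: 3; 1; 6; 6; 3]); (2, [:: 3; 2; 3; 6; 5]); (2, [:: 3; 2; 5; 6; 3]);
       (2, [:: 6; 1; 3; 6; 3])]
    [:: [:: 3; 1; 8; 6; 3]; [:: 4; 1; 4; 6; 6]; [:: 6; 1; 3; 8; 3]; [:: 5; 1; 4; 6; 5];
       [:: 8; 1; 3; 6; 3]; [:: 3; 2; 5; 8; 3]; [:: 6; 2; 3; 6; 4]; [:: 3; 1; 6; 8; 3];
       [:: 4; 1; 6; 6; 4]; [:: 3; 2; 3; 8; 5]; [:: 6; 1; 4; 6; 4]; [:: 4; 2; 4; 6; 5];
       [:: 3; 1; 3; 8; 6]; [:: 6; 2; 4; 6; 3]; [:: 3; 1; 3; 6; 8]; [:: 5; 1; 5; 6; 4];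
       [:: 4; 2; 5; 6; 4]]
    [::];
  Certificate [:: 3; 5; 4; 3; 6]
    [:: [:: 3; 5; 2; 5; 6]; [:: 3; 3; 4; 5; 6]]
    [:: (1, [:: 3; 5; 1; 5; 6]); (1, [:: 5; 3; 1; 5; 6]); (1, [:: 5; 5; 1; 3; 6]);
       (2, [:: 3; 3; 1; 6; 6]); (2, [:: 3; 3; 2; 5; 6]); (2, [:: 3; 5; 2; 3; 6]);
       (2, [:: 3; 6; 1; 3; 6]); (2, [:: 6; 3; 1; 3; 6])]
    [:: [:: 5; 5; 1; 4; 6]; [:: 4; 5; 1; 5; 6]; [:: 3; 5; 2; 3; 8]; [:: 6; 4; 2; 3; 6];
       [:: 6; 3; 1; 3; 8]; [:: 4; 4; 1; 6; 6]; [:: 4; 4; 2; 5; 6]; [:: 4; 6; 1; 4; 6];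
       [:: 6; 3; 2; 4; 6]; [:: 3; 3; 1; 8; 6]; [:: 3; 8; 1; 3; 6]; [:: 3; 3; 1; 6; 8];
       [:: 4; 5; 2; 4; 6]; [:: 3; 3; 2; 5; 8]; [:: 3; 6; 1; 3; 8]; [:: 6; 4; 1; 4; 6];
       [:: 5; 4; 1; 5; 6]; [:: 8; 3; 1; 3; 6]]
    [::];
  Certificate [:: 3; 5; 4; 6; 3]
    [:: [:: 3; 5; 2; 6; 5]; [:: 3; 3; 4; 6; 5]]
    [:: (1, [:: 3; 5; 1; 6; 5]); (1, [:: 5; 3; 1; 6; 5]); (1, [:: 5; 5; 1; 6; 3]);
       (2, [:: 3; 3; 1; 6; 6]); (2, [:: 3; 3; 2; 6; 5]); (2, [:: 3; 5; 2; 6; 3]);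
       (2, [:: 3; 6; 1; 6; 3]); (2, [:: 6; 3; 1; 6; 3])]
    [:: [:: 3; 6; 1; 8; 3]; [:: 5; 4; 1; 6; 5]; [:: 6; 3; 1; 8; 3]; [:: 4; 6; 1; 6; 4];
       [:: 6; 3; 2; 6; 4]; [:: 4; 4; 2; 6; 5]; [:: 6; 4; 2; 6; 3]; [:: 3; 3; 2; 8; 5];
       [:: 4; 4; 1; 6; 6]; [:: 5; 5; 1; 6; 4]; [:: 3; 3; 1; 8; 6]; [:: 3; 5; 2; 8; 3];
       [:: 4; 5; 2; 6; 4]; [:: 6; 4; 1; 6; 4]; [:: 4; 5; 1; 6; 5]; [:: 3; 8; 1; 6; 3];
       [:: 8; 3; 1; 6; 3]; [:: 3; 3; 1; 6; 8]]
    [::];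
  Certificate [:: 3; 5; 6; 4; 3]
    [:: [:: 3; 5; 6; 2; 5]; [:: 3; 3; 5; 4; 6]]
    [:: (1, [:: 3; 5; 5; 2; 5]); (1, [:: 3; 5; 5; 4; 3]); (1, [:: 5; 3; 5; 2; 5]);
       (1, [:: 5; 3; 5; 4; 3]); (1, [:: 5; 5; 5; 2; 3]); (2, [:: 3; 3; 5; 2; 6]);
       (2, [:: 3; 3; 6; 2; 5]); (2, [:: 3; 3; 6; 4; 3]); (2, [:: 3; 5; 6; 2; 3]);
       (2, [:: 3; 6; 5; 2; 3]); (2, [:: 6; 3; 5; 2; 3])]
    [:: [:: 5; 4; 5; 4; 3]; [:: 6; 4; 5; 2; 4]; [:: 3; 3; 5; 2; 8]; [:: 3; 3; 8; 4; 3];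
       [:: 4; 5; 5; 4; 3]; [:: 4; 6; 5; 2; 4]; [:: 3; 5; 5; 4; 4]; [:: 5; 4; 5; 2; 5];
       [:: 3; 3; 8; 2; 5]; [:: 5; 5; 5; 2; 4]; [:: 4; 4; 5; 2; 6]; [:: 6; 4; 6; 2; 3];
       [:: 4; 3; 6; 4; 4]; [:: 3; 5; 8; 2; 3]; [:: 4; 5; 6; 2; 4]; [:: 3; 8; 5; 2; 3];
       [:: 4; 4; 6; 4; 3]; [:: 4; 5; 5; 2; 5]; [:: 6; 3; 6; 2; 4]; [:: 3; 4; 6; 4; 4];
       [:: 4; 4; 6; 2; 5]; [:: 8; 3; 5; 2; 3]; [:: 5; 3; 5; 4; 4]]
    [::]]%N.

Definition strong_certificates : seq certificate := [::
  Certificate [:: 1; 3; 6; 6; 5]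
    [:: [:: 1; 3; 6; 5; 6]; [:: 1; 3; 5; 6; 6]]
    [:: (1, [:: 1; 3; 5; 5; 6]); (1, [:: 1; 3; 5; 6; 5]); (1, [:: 1; 3; 6; 5; 5]);
       (2, [:: 1; 3; 5; 5; 5])]
    [:: [:: 2; 4; 5; 5; 5]]
    [:: [:: 1; 5; 5; 5; 5]];
  Certificate [:: 3; 1; 6; 6; 5]
    [:: [:: 3; 1; 6; 5; 6]; [:: 3; 1; 5; 6; 6]]
    [:: (1, [:: 3; 1; 5; 5; 6]); (1, [:: 3; 1; 5; 6; 5]); (1, [:: 3; 1; 6; 5; 5]);
       (2, [:: 3; 1; 5; 5; 5])]
    [:: [:: 4; 2; 5; 5; 5]]
    [:: [:: 5; 1; 5; 5; 5]];
  Certificate [:: 3; 5; 6; 6; 1]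
    [:: [:: 3; 5; 6; 5; 2]; [:: 3; 5; 5; 6; 2]]
    [:: (1, [:: 3; 5; 5; 5; 2]); (1, [:: 3; 5; 5; 6; 1]); (1, [:: 3; 5; 6; 5; 1]);
       (2, [:: 3; 5; 5; 5; 1])]
    [:: [:: 4; 6; 5; 5; 1]]
    [:: [:: 5; 5; 5; 5; 1]];
  Certificate [:: 3; 5; 2; 6; 5]
    [:: [:: 3; 5; 1; 6; 6]; [:: 3; 5; 2; 5; 6]]
    [:: (1, [:: 3; 5; 1; 5; 6]); (1, [:: 3; 5; 1; 6; 5]); (1, [:: 3; 5; 2; 5; 5]);
       (2, [:: 3; 5; 1; 5; 5])]
    [:: [:: 4; 6; 1; 5; 5]]
    [:: [:: 5; 5; 1; 5; 5]];
  Certificate [:: 3; 5; 6; 2; 5]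
    [:: [:: 3; 5; 6; 1; 6]; [:: 3; 5; 5; 2; 6]]
    [:: (1, [:: 3; 5; 5; 1; 6]); (1, [:: 3; 5; 5; 2; 5]); (1, [:: 3; 5; 6; 1; 5]);
       (2, [:: 3; 5; 5; 1; 5])]
    [:: [:: 4; 6; 5; 1; 5]]
    [:: [:: 5; 5; 5; 1; 5]]]%N.

Lemma strict_certificates_valid : all strict_check strict_certificates.
Proof. by vm_compute. Qed.

Lemma strong_certificates_valid : all strong_check strong_certificates.
Proof. by vm_compute. Qed.

Theorem lemma4 :
  (forall x, x \in [:: mkmon 1 6 3 6 5; mkmon 1 6 6 3 5; mkmon 3 5 5 2 6;
                      mkmon 3 5 5 6 2; mkmon 3 5 6 5 2; mkmon 3 4 5 3 6;
                      mkmon 3 4 5 6 3; mkmon 3 5 4 3 6; mkmon 3 5 4 6 3;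
                      mkmon 3 5 6 4 3] ->
     strictly_inadmissible x) /\
  (forall x, x \in [:: mkmon 1 3 6 6 5; mkmon 3 1 6 6 5; mkmon 3 5 6 6 1;
                      mkmon 3 5 2 6 5; mkmon 3 5 6 2 5] ->
     strongly_inadmissible x).
Proof.
split=> x.
- change (x \in [seq mk (cert_mon c) | c <- strict_certificates] -> strictly_inadmissible x).
  by case/(mem_map_all strict_certificates_valid) => c /strict_checkP + ->.
- change (x \in [seq mk (cert_mon c) | c <- strong_certificates] -> strongly_inadmissible x).
  by case/(mem_map_all strong_certificates_valid) => c /strong_checkP + ->.
Qed.
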